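(* Let $p$ be a prime, let $h \in \mathbb{Z}$, and let $q \in \mathbb{C}_p$ with $|1-q|_p < p^{-\frac{1}{p-1}}$. Then for every integer $n \geq 0$ and every $x \in \mathbb{Z}_p$, $$\lim_{N\to\infty} \frac{1}{p^N}\sum_{y=0}^{p^N-1} q^{hy}\, y^n = B_{n,q}^{(h)}, \qquad \lim_{N\to\infty} \frac{1}{p^N}\sum_{y=0}^{p^N-1} q^{hy}\,(x+y)^n = B_{n,q}^{(h)}(x).$$ That is, $\int_{\mathbb{Z}_p} q^{hy} y^n\, d\mu_1(y) = B_{n,q}^{(h)}$ and $\int_{\mathbb{Z}_p} q^{hy}(x+y)^n\, d\mu_1(y) = B_{n,q}^{(h)}(x)$.
   Context: $\mathbb{Z}_p$, $\mathbb{C}_p$ denote the $p$-adic integers and the completion of an algebraic closure of $\mathbb{Q}_p$, with absolute value normalized by $|p|_p = p^{-1}$. For $q\in\mathbb{C}_p$ with $|1-q|_p<p^{-1/(p-1)}$, $q^x := \exp(x\log q)$ for $x\in\mathbb{Z}_p$. For a uniformly differentiable $f:\mathbb{Z}_p\to\mathbb{C}_p$, the Volkenborn integral is $\int_{\mathbb{Z}_p} f(x)\,d\mu_1(x) := \lim_{N\to\infty} p^{-N}\sum_{x=0}^{p^N-1} f(x)$. The $(h,q)$-Bernoulli numbers $B_{n,q}^{(h)}$ and polynomials $B_{n,q}^{(h)}(x)$ are defined by the power series expansions in $t$ $$\frac{h\log q + t}{q^h e^t - 1} = \sum_{n=0}^\infty B_{n,q}^{(h)}\frac{t^n}{n!},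 \qquad \frac{h\log q + t}{q^h e^t - 1}\, e^{xt} = \sum_{n=0}^\infty B_{n,q}^{(h)}(x)\frac{t^n}{n!}.$$ *)

(* K is an abstract field playing the role of C_p, equipped
   with a non-archimedean absolute value [a : K -> R] into a realType. *)
From HB Require Import structures.
From mathcomp Require Import all_boot all_order all_algebra.
From mathcomp Require Import reals.
From Stdlib Require Import ClassicalEpsilon.
Set Implicit Arguments. Unset Strict Implicit. Unset Printing Implicit Defensive.
Import Order.TTheory GRing.Theory Num.Theory.
Local Open Scope ring_scope.

Section PadicDefs.
Variables (R : realType) (K : fieldType) (a : K -> R).

Definition Kcvg (u : nat -> K) (l : K) : Prop :=
  forall eps : R, 0 < eps -> exists N : nat, forall n, (N <= n)%N -> a (u n - l) < eps.

Definition Kcauchy (u : nat -> K) : Prop :=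
  forall eps : R, 0 < eps -> exists N : nat,
    forall m n, (N <= m)%N -> (N <= n)%N -> a (u m - u n) < eps.

(* the limit of a sequence (an arbitrary value if it does not converge) *)
Definition Klim (u : nat -> K) : K := epsilon (inhabits 0) (fun l => Kcvg u l).

Definition Kseries (c : nat -> K) : K := Klim (fun N => \sum_(k < N) c k).

Definition Kexp (z : K) : K := Kseries (fun k => z ^+ k / (k`!)%:R).
Definition Klog (q : K) : K :=
  Kseries (fun k => (-1) ^+ k * (q - 1) ^+ k.+1 / (k.+1)%:R).

Definition Kqpow (q x : K) : K := Kexp (x * Klog q).

(* x lies in Z_p = the closure of the integers in K *)
Definition in_Zp (x : K) : Prop :=
  exists u : nat -> int, Kcvg (fun n => (u n)%:~R) x.

End PadicDefs.

(* a : K -> R is a complete non-archimedean absolute value on K with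
   |p| = p^-1 (i.e. extending the p-adic absolute value on Q) *)
Definition is_padic_abs (R : realType) (K : fieldType) (p : nat) (a : K -> R) : Prop :=
  (forall x, 0 <= a x) /\
  (forall x, a x = 0 <-> x = 0) /\
  (forall x y, a (x * y) = a x * a y) /\
  (forall x y, a (x + y) <= Num.max (a x) (a y)) /\
  a (p%:R) = (p%:R)^-1 /\
  (forall u : nat -> K, Kcauchy a u -> exists l, Kcvg a u l).

(* formal power series in t, as coefficient sequences, and their product *)
Definition fps_mul (K : fieldType) (f g : nat -> K) : nat -> K :=
  fun n => \sum_(k < n.+1) f k * g (n - k)%N.

(* coefficients of h log q + t *)
Definition bern_num (R : realType) (K : fieldType) (a : K -> R) (q : K) (h : int) : nat -> K :=
  fun n => if n == 0%N then h%:~R * Klog a q else if n == 1%N then 1 else 0.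

(* coefficients of q^h e^t - 1, where q^h = exp(h log q) *)
Definition bern_den (R : realType) (K : fieldType) (a : K -> R) (q : K) (h : int) : nat -> K :=
  fun n => Kqpow a q h%:~R / (n`!)%:R - (if n == 0%N then 1 else 0).

Definition exp_fps (K : fieldType) (x : K) : nat -> K := fun n => x ^+ n / (n`!)%:R.

(* B is the sequence (B_{n,q}^{(h)})_n, i.e.
   (h log q + t)/(q^h e^t - 1) = sum_n B n t^n/n!  in K((t)),
   equivalently (q^h e^t - 1) * sum_n B n t^n/n! = h log q + t. *)
Definition is_hq_bernoulli (R : realType) (K : fieldType) (a : K -> R) (q : K) (h : int)
    (B : nat -> K) : Prop :=
  fps_mul (bern_den a q h) (fun n => B n / (n`!)%:R) =1 bern_num a q h.

(* B is the sequence (B_{n,q}^{(h)}(x))_n, i.e.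
   (h log q + t)/(q^h e^t - 1) e^{xt} = sum_n B n t^n/n!  in K((t)). *)
Definition is_hq_bernoulli_poly (R : realType) (K : fieldType) (a : K -> R) (q : K) (h : int)
    (x : K) (B : nat -> K) : Prop :=
  fps_mul (bern_den a q h) (fun n => B n / (n`!)%:R) =1
  fps_mul (bern_num a q h) (exp_fps x).

From HB Require Import structures.
From mathcomp Require Import all_boot all_order all_algebra.
From mathcomp Require Import reals.
From mathcomp Require Import ring lra zify.
From Stdlib Require Import ClassicalEpsilon.
Set Implicit Arguments. Unset Strict Implicit. Unset Printing Implicit Defensive.
Import Order.TTheory GRing.Theory Num.Theory.
Local Open Scope ring_scope.

(* Put [w = q^h = exp (h log q)], so that [q^(h y) = w^y], and
   [S_N(n) = p^-N \sum_(y < p^N) w^y (x + y)^n].  Summing over [y] telescopes: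
     [w \sum_i C(n, i) S_N(n - i) - S_N(n) = p^-N (w^(p^N) (x + p^N)^n - x^n)],
   where the left side is [n!] times the [t^n]-coefficient of [(w e^t - 1) \sum_n S_N(n) t^n/n!].
   As [|p^N| -> 0] and [w^(p^N) = exp (p^N h log q) = 1 + p^N h log q + O(|p^N|^2)], the right
   side tends to [h log q x^n + n x^(n-1)], [n!] times the [t^n]-coefficient of
   [(h log q + t) e^(x t)].  The system is triangular, so solving it for [S_N(n)] by induction
   on [n] shows that the [S_N(n)] converge, and their limits satisfy the relation that defines
   [B_{n,q}^(h)(x)] uniquely.  The analytic input is that [exp] converges and is multiplicative
   on [|z| < p^(-1/(p-1))], by Legendre's bound on [|k!|], and that [h log q] lies in that disc. *)

Lemma bernoulli_ineq (R : realFieldType) (t : R) n : 0 <= t -> 1 + n%:R * t <= (1 + t) ^+ n.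
Proof.
move=> t0; elim: n => [|n IH]; first by rewrite mul0r addr0 expr0.
rewrite exprS -natr1 mulrDl mul1r.
have : 1 <= (1 + t) ^+ n by apply: exprn_ege1; lra.
nra.
Qed.

Lemma eventually_exprn_lt (R : archiRealFieldType) (s e : R) : 0 <= s -> s < 1 -> 0 < e ->
  exists N : nat, forall n, (N <= n)%N -> s ^+ n < e.
Proof.
move=> s0 s1 e0; have [->|s_neq0] := eqVneq s 0.
  by exists 1%N => -[|n] //= _; rewrite expr0n.
have s_gt0 : 0 < s by rewrite lt0r s_neq0.
set t := s^-1 - 1; have t_gt0 : 0 < t by rewrite subr_gt0 invf_gt1.
have et_ge0 : 0 <= (e * t)^-1 by rewrite invr_ge0 ltW // mulr_gt0.
exists (Num.Def.archi_bound (e * t)^-1) => n le_bn.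
have lt_n : (e * t)^-1 < n%:R.
  by apply: lt_le_trans (archi_boundP et_ge0) _; rewrite ler_nat.
have : e^-1 < s^-1 ^+ n.
  have -> : s^-1 = 1 + t by rewrite /t; ring.
  apply: lt_le_trans (bernoulli_ineq n (ltW t_gt0)).
  rewrite invfM ltr_pdivrMr // in lt_n; lra.
by rewrite exprVn ltf_pV2 ?posrE ?exprn_gt0.
Qed.

(** * Exponential generating functions *)

Section ShiftDifference.
Variable K : comPzRingType.

(* Coefficients of [(w e^t - 1) F(t)] for [F(t) = \sum_n T n t^n / n!], times [n!]. *)
Definition shift_diff (w : K) (T : nat -> K) n :=
  w * \sum_(i < n.+1) T (n - i)%N *+ 'C(n, i) - T n.

Lemma shift_diff_recl w T n :
  shift_diff w T n = (w - 1) * T n + w * \sum_(i < n) T (n - i.+1)%N *+ 'C(n, i.+1).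
Proof. by rewrite /shift_diff big_ord_recl subn0 bin0 mulr1n mulrDr mulrBl mul1r addrAC. Qed.

Lemma shift_diffZ w s T n : shift_diff w (fun k => s * T k) n = s * shift_diff w T n.
Proof.
rewrite /shift_diff mulrBr; congr (_ - _).
by rewrite [RHS]mulrCA [s * _]mulr_sumr; congr (_ * _); apply: eq_bigr => i _; rewrite mulrnAr.
Qed.

Lemma shift_diff_sum w M (F : 'I_M -> nat -> K) n :
  shift_diff w (fun k => \sum_(y < M) F y k) n = \sum_(y < M) shift_diff w (F y) n.
Proof.
rewrite /shift_diff sumrB; congr (_ - _).
by under eq_bigr do rewrite -sumrMnl; rewrite exchange_big mulr_sumr.
Qed.

Lemma shift_diff_twisted_power w (x : K) y n :
  shift_diff w (fun k => w ^+ y * (x + y%:R) ^+ k) n =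
  w ^+ y.+1 * (x + y.+1%:R) ^+ n - w ^+ y * (x + y%:R) ^+ n.
Proof.
have -> : (x + y.+1%:R) ^+ n = \sum_(i < n.+1) (x + y%:R) ^+ (n - i) *+ 'C(n, i).
  by rewrite -natr1 addrA exprDn; apply: eq_bigr => i _; rewrite expr1n mulr1.
rewrite /shift_diff exprS -mulrA; congr (w * _ - _).
by rewrite mulr_sumr; apply: eq_bigr => i _; rewrite mulrnAr.
Qed.

Lemma shift_diff_twisted_power_sum w (x : K) M n :
  shift_diff w (fun k => \sum_(y < M) w ^+ y * (x + y%:R) ^+ k) n =
  w ^+ M * (x + M%:R) ^+ n - x ^+ n.
Proof.
rewrite shift_diff_sum; under eq_bigr do rewrite shift_diff_twisted_power.
rewrite -(big_mkord xpredT (fun y => w ^+ y.+1 * (x + y.+1%:R) ^+ n - w ^+ y * (x + y%:R) ^+ n)).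
by rewrite telescope_sumr // expr0 mul1r addr0.
Qed.

End ShiftDifference.

Section CharZero.
Variable K : fieldType.
Hypothesis K_char0 : [pchar K] =i pred0.

Lemma char0_natf_neq0 n : (0 < n)%N -> n%:R != 0 :> K.
Proof. by rewrite (pcharf0P _).1 // -lt0n. Qed.

Lemma factf_neq0 n : n`!%:R != 0 :> K.
Proof. by rewrite char0_natf_neq0 ?fact_gt0. Qed.

Lemma shift_diff_triangular (w : K) n : exists m (al : K) (be : 'I_n -> K),
  forall T, T n = al * shift_diff w T m + \sum_(i < n) be i * T (n - i.+1)%N.
Proof.
have [->|w_neq1] := eqVneq w 1.
  exists n.+1, n.+1%:R^-1, (fun i => - (n.+1%:R^-1 * 'C(n.+1, i.+2)%:R)) => T.
  rewrite shift_diff_recl subrr mul0r add0r mul1r big_ord_recl /= subn1 bin1.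
  rewrite mulrDr -(mulr_natl (T n)) mulKf ?char0_natf_neq0 //.
  rewrite -addrA addrC -[LHS]add0r; congr (_ + _).
  rewrite mulr_sumr -big_split big1 // => i _ /=.
  by rewrite subSS -mulr_natr; ring.
exists n, (w - 1)^-1, (fun i => - ((w - 1)^-1 * w * 'C(n, i.+1)%:R)) => T.
rewrite shift_diff_recl mulrDr mulKf ?subr_eq0 // -addrA -[LHS]addr0; congr (_ + _).
rewrite !mulr_sumr -big_split big1 // => i _ /=.
by rewrite -mulr_natr; ring.
Qed.

Lemma shift_diff_inj (w : K) T1 T2 : shift_diff w T1 =1 shift_diff w T2 -> T1 =1 T2.
Proof.
move=> E; elim/ltn_ind => n IH; have [m [al [be Tn]]] := shift_diff_triangular w n.
rewrite (Tn T1) (Tn T2) E; congr (_ + _); apply: eq_bigr => i _.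
by rewrite IH //; have := ltn_ord i; lia.
Qed.

Lemma exp_term_addn (x y : K) k : (x + y) ^+ k / k`!%:R =
  \sum_(i < k.+1) x ^+ i / i`!%:R * (y ^+ (k - i) / (k - i)`!%:R).
Proof.
rewrite addrC exprDn mulr_suml; apply: eq_bigr => i _.
rewrite -(bin_fact (ltnSE (ltn_ord i))) (natrM _ 'C(_, _)) (natrM _ i`!).
have cancel_fact (u v : K) c : c%:R != 0 :> K -> u != 0 -> v != 0 ->
    y ^+ (k - i) * x ^+ i *+ c / (c%:R * (u * v)) = x ^+ i / u * (y ^+ (k - i) / v).
  by move=> c0 u0 v0; rewrite -mulr_natr; field; rewrite c0 u0 v0.
by rewrite cancel_fact ?factf_neq0 ?char0_natf_neq0 // bin_gt0 -ltnS.
Qed.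

Lemma fps_mul_exp_den (w : K) (B : nat -> K) n :
  fps_mul (fun k => w / k`!%:R - (if k == 0%N then 1 else 0)) (fun k => B k / k`!%:R) n
    * n`!%:R = shift_diff w B n.
Proof.
rewrite /fps_mul mulr_suml big_ord_recl shift_diff_recl subn0 fact0 divr1 -mulrA.
rewrite divfK ?factf_neq0 //; congr (_ + _); rewrite mulr_sumr; apply: eq_bigr => i _.
have cancel_fact (u v b : K) c : u != 0 -> v != 0 ->
    w / u * (b / v) * (c%:R * (u * v)) = w * (b *+ c).
  by move=> u0 v0; rewrite -mulr_natr; field; apply/andP.
rewrite lift0 subr0 -(bin_fact (ltn_ord i)) (natrM _ 'C(_, _)) (natrM _ i.+1`!).
by rewrite cancel_fact ?factf_neq0.
Qed.

Lemma fps_mul_num_exp (c x : K) n :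
  fps_mul (fun k => if k == 0%N then c else if k == 1%N then 1 else 0) (exp_fps x) n * n`!%:R =
  c * x ^+ n + x ^+ n.-1 *+ n.
Proof.
rewrite /fps_mul /exp_fps; case: n => [|n].
  by rewrite big_ord1 subnn expr0 mulr0n addr0 fact0 divr1 !mulr1.
rewrite 2!big_ord_recl big1 ?addr0 => [|i _]; last by rewrite mul0r.
rewrite /= subn0 subn1 /= mulrDl mul1r -mulrA divfK ?factf_neq0 //; congr (_ + _).
by rewrite factS natrM mulrCA divfK ?factf_neq0 // mulr_natl.
Qed.

Lemma fps_mul_exp0 (f : nat -> K) : fps_mul f (exp_fps 0) =1 f.
Proof.
move=> n; rewrite /fps_mul /exp_fps big_ord_recr /= subnn expr0 fact0 divr1 mulr1.
by rewrite big1 ?add0r // => i _; rewrite expr0n subn_eq0 leqNgt ltn_ord mul0r mulr0.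
Qed.

End CharZero.

Lemma hq_bernoulliE (R : realType) (K : fieldType) (a : K -> R) q h B :
  is_hq_bernoulli a q h B <-> is_hq_bernoulli_poly a q h 0 B.
Proof. by split=> E n; rewrite E fps_mul_exp0. Qed.

(** * Non-archimedean absolute values *)

Lemma logn_fact_le p n : prime p -> (p.-1 * logn p n`! <= n)%N.
Proof.
move=> p_pr; rewrite logn_fact //.
suff /(_ n) : forall k, (p.-1 * \sum_(1 <= i < k.+1) n %/ p ^ i + n %/ p ^ k <= n)%N.
  by apply: leq_trans; rewrite leq_addr.
elim=> [|k IH]; first by rewrite big_geq // muln0 expn0 divn1.
apply: leq_trans IH; rewrite big_nat_recr //= mulnDr -addnA leq_add2l.
have : (n %/ p ^ k.+1 * p <= n %/ p ^ k)%N by rewrite expnSr divnMA leq_divM.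
by case: (p) (prime_gt0 p_pr) => // p' _ /=; lia.
Qed.

Lemma ltn_pred_mul_expn p v : (0 < p)%N -> (p.-1 * v < p ^ v)%N.
Proof.
move=> p_gt0; elim: v => [|v IH]; first by rewrite muln0 expn0.
have := expn_gt0 p v; rewrite p_gt0 expnS.
by case: p p_gt0 IH => // p' _ /=; nia.
Qed.

Section PadicAbs.
Variables (R : realType) (K : fieldType) (a : K -> R) (p : nat).
Hypotheses (p_pr : prime p) (Ha : is_padic_abs p a).

Lemma abs_ge0 x : 0 <= a x. Proof. by case: Ha. Qed.
Lemma abs_eq0 x : a x = 0 <-> x = 0. Proof. by case: Ha => _ []. Qed.
Lemma absM x y : a (x * y) = a x * a y. Proof. by case: Ha => _ [] _ []. Qed.
Lemma absD x y : a (x + y) <= Num.max (a x) (a y). Proof. by case: Ha => _ [] _ [] _ []. Qed.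
Lemma abs_p : a p%:R = p%:R^-1. Proof. by case: Ha => _ [] _ [] _ [] _ []. Qed.
Lemma abs_complete u : Kcauchy a u -> exists l, Kcvg a u l.
Proof. by case: Ha => _ [] _ [] _ [] _ [] _; apply. Qed.

Lemma abs0 : a 0 = 0. Proof. exact/abs_eq0. Qed.

Lemma abs1 : a 1 = 1.
Proof.
have a1_neq0 : a 1 != 0 by apply/eqP => /abs_eq0/eqP; rewrite oner_eq0.
by apply: (mulfI a1_neq0); rewrite -absM !mulr1.
Qed.

Lemma absN x : a (- x) = a x.
Proof.
have aN1 : a (-1) = 1.
  have : a (-1) * a (-1) = 1 by rewrite -absM mulrNN mulr1 abs1.
  by have := abs_ge0 (-1); nra.
by rewrite -mulN1r absM aN1 mul1r.
Qed.

Lemma abs_distC x y : a (x - y) = a (y - x).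
Proof. by rewrite -absN opprB. Qed.

Lemma absD_le x y b : a x <= b -> a y <= b -> a (x + y) <= b.
Proof. by move=> ? ?; apply: le_trans (absD x y) _; rewrite ge_max; apply/andP. Qed.

Lemma absD_lt x y b : a x < b -> a y < b -> a (x + y) < b.
Proof. by move=> ? ?; apply: le_lt_trans (absD x y) _; rewrite gt_max; apply/andP. Qed.

Lemma absX x n : a (x ^+ n) = a x ^+ n.
Proof. by elim: n => [|n IH]; rewrite ?abs1 // !exprS absM IH. Qed.

Lemma absV x : a x^-1 = (a x)^-1.
Proof.
have [->|x_neq0] := eqVneq x 0; first by rewrite invr0 abs0 invr0.
have ax_neq0 : a x != 0 by apply/eqP => /abs_eq0/eqP; rewrite (negPf x_neq0).
by apply: (mulfI ax_neq0); rewrite -absM !mulfV // abs1.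
Qed.

Lemma abs_sum_le (I : Type) (r : seq I) (P : pred I) (F : I -> K) b :
  0 <= b -> (forall i, P i -> a (F i) <= b) -> a (\sum_(i <- r | P i) F i) <= b.
Proof.
move=> b0 Fb; apply: (big_ind (fun x => a x <= b)) => //; first by rewrite abs0.
by move=> x y; apply: absD_le.
Qed.

Lemma abs_sum_lt (I : Type) (r : seq I) (P : pred I) (F : I -> K) b :
  0 < b -> (forall i, P i -> a (F i) < b) -> a (\sum_(i <- r | P i) F i) < b.
Proof.
move=> b0 Fb; apply: (big_ind (fun x => a x < b)) => //; first by rewrite abs0.
by move=> x y; apply: absD_lt.
Qed.

Lemma abs_sum_expn_le (I : Type) (r : seq I) (P : pred I) (F : I -> K) m t :
  (0 < m)%N -> 0 <= t -> (forall i, P i -> a (F i) ^+ m <= t) ->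
  a (\sum_(i <- r | P i) F i) ^+ m <= t.
Proof.
move=> m_gt0 t0 Ft; apply: (big_ind (fun x => a x ^+ m <= t)) => //.
  by rewrite abs0 expr0n gtn_eqF.
move=> x y xt yt; have := absD x y; rewrite le_max => /orP[] le_xy;
  [apply: le_trans xt | apply: le_trans yt]; by rewrite lerXn2r ?nnegrE ?abs_ge0.
Qed.

Lemma abs_natr_le1 n : a n%:R <= 1.
Proof. by elim: n => [|n IH]; rewrite ?abs0 // -natr1; apply: absD_le; rewrite ?abs1. Qed.

Lemma abs_intr_le1 (z : int) : a z%:~R <= 1.
Proof. by case: z => n; rewrite ?NegzE ?mulrNz ?absN -pmulrn abs_natr_le1. Qed.

Lemma p_gt1 : 1 < p%:R :> R. Proof. by rewrite ltr1n prime_gt1. Qed.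
Lemma p_gt0 : 0 < p%:R :> R. Proof. exact: lt_trans ltr01 p_gt1. Qed.
Lemma p_inv_ge0 : 0 <= p%:R^-1 :> R. Proof. by rewrite invr_ge0 ltW // p_gt0. Qed.
Lemma p_inv_lt1 : p%:R^-1 < 1 :> R. Proof. by rewrite invf_lt1 ?p_gt0 ?p_gt1. Qed.
Lemma pred_p_gt0 : (0 < p.-1)%N. Proof. by case: p (prime_gt1 p_pr) => [|[]]. Qed.

(* Bezout gives [1 = b p - c n]; since [|b p| < 1], ultrametricity forces [|c n| >= 1]. *)
Lemma abs_natr_coprime n : coprime p n -> a n%:R = 1.
Proof.
move=> cop; apply/eqP; rewrite eq_le abs_natr_le1 /=.
have [c _] := Bezoutr n (prime_gt0 p_pr); rewrite gcdnC (eqP cop) => /dvdnP[b Eb].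
have Eone : 1 = (b * p)%:R - (c * n)%:R :> K by rewrite -Eb natrD addrK.
have abp : a (b * p)%:R < 1.
  rewrite natrM absM abs_p; apply: le_lt_trans p_inv_lt1.
  by rewrite ler_piMl ?p_inv_ge0 ?abs_natr_le1.
have : a 1 <= Num.max (a (b * p)%:R) (a (c * n)%:R) by rewrite {1}Eone -(absN (_ * n)%:R) absD.
rewrite abs1 le_max leNgt abp /= natrM absM => /le_trans; apply.
by rewrite ler_piMl ?abs_ge0 ?abs_natr_le1.
Qed.

Lemma abs_natr n : (0 < n)%N -> a n%:R = (p%:R ^+ logn p n)^-1.
Proof.
move=> n_gt0; have [m cop {1}->] := pfactor_coprime p_pr n_gt0.
by rewrite natrM natrX absM absX abs_p abs_natr_coprime // mul1r exprVn.
Qed.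

Lemma abs_natr_gt0 n : (0 < n)%N -> 0 < a n%:R.
Proof. by move=> n_gt0; rewrite abs_natr // invr_gt0 exprn_gt0 ?p_gt0. Qed.

Lemma abs_pchar0 : [pchar K] =i pred0.
Proof.
apply/pcharf0P => -[|n]; rewrite ?eqxx //=; apply/negbTE.
by move/abs_natr_gt0: (ltn0Sn n); apply: contraTneq => ->; rewrite abs0 ltxx.
Qed.

Lemma abs_natr_expn_ge1 n k : (0 < n)%N -> (p.-1 * logn p n <= k)%N ->
  1 <= a n%:R ^+ p.-1 * p%:R ^+ k.
Proof.
move=> n_gt0 le_k.
have -> : a n%:R ^+ p.-1 = (p%:R ^+ (p.-1 * logn p n))^-1.
  by rewrite abs_natr // -exprVn -exprM mulnC exprVn.
rewrite -(subnKC le_k) exprD mulKf ?exprn_ege1 ?ltW ?p_gt1 //.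
by rewrite expf_neq0 // gt_eqF // p_gt0.
Qed.

Lemma abs_fact_ge n : 1 <= a n`!%:R ^+ p.-1 * p%:R ^+ n.
Proof. by rewrite abs_natr_expn_ge1 ?fact_gt0 ?logn_fact_le. Qed.

Lemma abs_succ_ge n : 1 <= a n.+1%:R ^+ p.-1 * p%:R ^+ n.
Proof.
rewrite abs_natr_expn_ge1 //; have := ltn_pred_mul_expn (logn p n.+1) (prime_gt0 p_pr).
by have := dvdn_leq (ltn0Sn n) (pfactor_dvdnn p n.+1); lia.
Qed.

(** * Convergence in K *)

Lemma eq_Kcvg u v l : u =1 v -> Kcvg a u l -> Kcvg a v l.
Proof. by move=> uv ul e e0; have [N uN] := ul e e0; exists N => n Nn; rewrite -uv uN. Qed.

Lemma Kcvg_cst c : Kcvg a (fun=> c) c.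
Proof. by move=> e e0; exists 0%N => n _; rewrite subrr abs0. Qed.

Lemma KcvgD u v l l' : Kcvg a u l -> Kcvg a v l' -> Kcvg a (fun n => u n + v n) (l + l').
Proof.
move=> ul vl e e0; have [N1 uN] := ul e e0; have [N2 vN] := vl e e0.
exists (maxn N1 N2) => n; rewrite geq_max => /andP[N1n N2n].
by rewrite opprD addrACA; apply: absD_lt; [apply: uN | apply: vN].
Qed.

Lemma KcvgN u l : Kcvg a u l -> Kcvg a (fun n => - u n) (- l).
Proof. by move=> ul e e0; have [N uN] := ul e e0; exists N => n Nn; rewrite -opprD absN uN. Qed.

Lemma KcvgB u v l l' : Kcvg a u l -> Kcvg a v l' -> Kcvg a (fun n => u n - v n) (l - l').
Proof. by move=> ul vl; apply: KcvgD => //; apply: KcvgN. Qed.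

Lemma KcvgMl c u l : Kcvg a u l -> Kcvg a (fun n => c * u n) (c * l).
Proof.
move=> ul e e0; have ac_gt0 : 0 < a c + 1 by have := abs_ge0 c; lra.
have [N uN] := ul _ (divr_gt0 e0 ac_gt0); exists N => n Nn.
rewrite -mulrBr absM; have := uN n Nn; rewrite ltr_pdivlMr // => lt_e.
by have := abs_ge0 c; have := abs_ge0 (u n - l); nra.
Qed.

Lemma KcvgMn u l k : Kcvg a u l -> Kcvg a (fun n => u n *+ k) (l *+ k).
Proof. by move=> ul; rewrite -mulr_natl; apply: eq_Kcvg (KcvgMl _ ul) => n; rewrite mulr_natl. Qed.

Lemma KcvgM u v l l' : Kcvg a u l -> Kcvg a v l' -> Kcvg a (fun n => u n * v n) (l * l').
Proof.
move=> ul vl e e0; set B := a l + 1 + a l'.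
have B_gt0 : 0 < B by have := abs_ge0 l; have := abs_ge0 l'; rewrite /B; lra.
have [N1 uN1] := ul 1 ltr01.
have [N2 uN2] := ul _ (divr_gt0 e0 B_gt0); have [N3 vN3] := vl _ (divr_gt0 e0 B_gt0).
exists (maxn N1 (maxn N2 N3)) => n; rewrite !geq_max => /and3P[N1n N2n N3n].
have -> : u n * v n - l * l' = u n * (v n - l') + (u n - l) * l' by ring.
have aun : a (u n) <= a l + 1.
  rewrite -(subrK l (u n)); apply: absD_le; have := abs_ge0 l; have := uN1 n N1n; lra.
have := uN2 n N2n; have := vN3 n N3n; rewrite !ltr_pdivlMr // /B => h3 h2.
have := abs_ge0 (u n); have := abs_ge0 (v n - l'); have := abs_ge0 (u n - l).
have := abs_ge0 l; have := abs_ge0 l'.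
by move=> *; apply: absD_lt; rewrite absM; nra.
Qed.

Lemma Kcvg_sum n (F : nat -> 'I_n -> K) (L : 'I_n -> K) :
  (forall i, Kcvg a (F^~ i) (L i)) -> Kcvg a (fun N => \sum_(i < n) F N i) (\sum_(i < n) L i).
Proof.
elim: n F L => [|n IH] F L FL.
  by rewrite big_ord0; apply: eq_Kcvg (Kcvg_cst 0) => N; rewrite big_ord0.
rewrite big_ord_recr; apply: eq_Kcvg (KcvgD (IH _ _ (fun i => FL _)) (FL ord_max)) => N.
by rewrite big_ord_recr.
Qed.

Lemma Kcvg_unique u l l' : Kcvg a u l -> Kcvg a u l' -> l = l'.
Proof.
move=> ul ul'; apply/eqP; rewrite -subr_eq0; apply/negP => /negP ll'_neq0.
have d_gt0 : 0 < a (l - l').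
  by rewrite lt_def abs_ge0 andbT; apply: contra ll'_neq0 => /eqP/abs_eq0->.
have [N1 uN1] := ul _ d_gt0; have [N2 uN2] := ul' _ d_gt0.
have : a (l - l') < a (l - l').
  have E : l - l' = (u (maxn N1 N2) - l') - (u (maxn N1 N2) - l) by ring.
  rewrite {1}E.
  by apply: absD_lt; rewrite ?absN; [apply: uN2 | apply: uN1]; rewrite ?leq_maxl ?leq_maxr.
by rewrite ltxx.
Qed.

Lemma Kcvg_lim u l : Kcvg a u l -> Klim a u = l.
Proof.
move=> ul; apply: (Kcvg_unique _ ul).
by apply: (epsilon_spec (inhabits 0) (fun l => Kcvg a u l)); exists l.
Qed.

Lemma Kcvg_dist_le u l x b : Kcvg a u l ->
  (exists N, forall n, (N <= n)%N -> a (u n - x) <= b) -> a (l - x) <= b.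
Proof.
move=> ul [N uN]; rewrite leNgt; apply/negP => lt_b.
have [N1 uN1] := ul _ (le_lt_trans (abs_ge0 (u N - x)) (le_lt_trans (uN N (leqnn N)) lt_b)).
have : a (l - x) < a (l - x).
  have E : l - x = (u (maxn N N1) - x) - (u (maxn N N1) - l) by ring.
  rewrite {1}E.
  apply: absD_lt; first by apply: le_lt_trans lt_b; apply: uN; rewrite leq_maxl.
  by rewrite absN; apply: uN1; rewrite leq_maxr.
by rewrite ltxx.
Qed.

Lemma Kcvg_squeeze u l (r : nat -> R) : (forall n, a (u n - l) <= r n) ->
  (forall e, 0 < e -> exists N, forall n, (N <= n)%N -> r n < e) -> Kcvg a u l.
Proof.
by move=> ur r0 e e0; have [N rN] := r0 e e0; exists N => n Nn; apply: le_lt_trans (ur n) (rN n Nn).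
Qed.

Lemma Kseries_cvg c : Kcvg a c 0 -> Kcvg a (fun N => \sum_(k < N) c k) (Kseries a c).
Proof.
move=> c0; suff [l sl] : exists l, Kcvg a (fun N => \sum_(k < N) c k) l.
  by rewrite /Kseries (Kcvg_lim sl).
apply: abs_complete.
suff tail_lt e : 0 < e -> exists N, forall m n, (N <= n)%N -> (n <= m)%N ->
    a (\sum_(k < m) c k - \sum_(k < n) c k) < e.
  move=> e /tail_lt[N tN]; exists N => m n Nm Nn.
  by have [/tN->//|/ltnW mn] := leqP n m; rewrite abs_distC tN.
move=> e0; have [N cN] := c0 e e0; exists N => m n Nn nm.
rewrite -!(big_mkord xpredT) (big_cat_nat (leq0n n) nm) /= addrC addrK big_nat_cond.
apply: abs_sum_lt => // k /andP[/andP[nk _] _].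
by rewrite -[c k]subr0 cN // (leq_trans Nn nk).
Qed.

Lemma Kcvg0_geometric (f : nat -> K) m b s : (0 < m)%N -> 0 <= b -> 0 <= s -> s < 1 ->
  (forall k, a (f k) ^+ m <= b * s ^+ k) -> Kcvg a f 0.
Proof.
move=> m_gt0 b0 s0 s1 fb e e0.
have em_gt0 : 0 < e ^+ m / (b + 1) by rewrite divr_gt0 ?exprn_gt0 //; lra.
have [N sN] := eventually_exprn_lt s0 s1 em_gt0; exists N => k Nk; rewrite subr0.
rewrite -(ltr_pXn2r m_gt0) ?nnegrE ?abs_ge0 ?ltW //; apply: le_lt_trans (fb k) _.
have := sN k Nk; rewrite ltr_pdivlMr; last lra.
by have := exprn_ge0 k s0; nra.
Qed.

(** * The exponential *)

Lemma cauchy_product_defect (u v : nat -> K) m s : (0 < m)%N -> 0 <= s -> s < 1 ->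
    (forall i, a (u i) ^+ m <= s ^+ i) -> (forall j, a (v j) ^+ m <= s ^+ j) ->
  Kcvg a (fun N => (\sum_(i < N) u i) * (\sum_(j < N) v j) -
                   \sum_(k < N) \sum_(i < k.+1) u i * v (k - i)%N) 0.
Proof.
move=> m_gt0 s0 s1 us vs.
pose T N := \sum_(i < N) u i * \sum_(0 <= j < N - i) v j.
have T_diag N : T N = \sum_(k < N) \sum_(i < k.+1) u i * v (k - i)%N.
  elim: N => [|N IH]; first by rewrite /T !big_ord0.
  rewrite big_ord_recr -IH /T big_ord_recr /= subSnn big_nat1 [in RHS]big_ord_recr /=.
  rewrite subnn addrA -big_split; congr (_ + _); apply: eq_bigr => i _ /=.
  by rewrite subSn 1?ltnW // big_nat_recr //= mulrDr.
have T_defect N : (\sum_(i < N) u i) * (\sum_(j < N) v j) - T N =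
    \sum_(i < N) u i * \sum_(N - i <= j < N) v j.
  rewrite /T mulr_suml -sumrB; apply: eq_bigr => i _; rewrite -mulrBr.
  by rewrite -(big_mkord xpredT) (big_cat_nat (leq0n (N - i)) (leq_subr i N)) /= addrC addrK.
apply: (Kcvg0_geometric (b := 1) m_gt0 ler01 s0 s1) => N.
rewrite -T_diag T_defect mul1r; apply: (abs_sum_expn_le _ m_gt0 (exprn_ge0 _ s0)) => i _.
rewrite mulr_sumr big_nat_cond; apply: (abs_sum_expn_le _ m_gt0 (exprn_ge0 _ s0)).
move=> j /andP[/andP[Nj jN] _]; rewrite absM exprMn.
apply: le_trans (_ : s ^+ i * s ^+ j <= _).
  by apply: ler_pM; rewrite ?exprn_ge0 ?abs_ge0.
rewrite -exprD; apply: ler_wiXn2l => //; first exact: ltW.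
by have := ltn_ord i; lia.
Qed.

(* [exp_ratio z < 1] iff [|z| < p^(-1/(p-1))], the disc of convergence of the exponential. *)
Definition exp_ratio z := a z ^+ p.-1 * p%:R.

Lemma exp_ratio_ge0 z : 0 <= exp_ratio z.
Proof. by rewrite mulr_ge0 ?exprn_ge0 ?abs_ge0 ?ltW ?p_gt0. Qed.

Lemma exp_ratio_le x y : a x <= a y -> exp_ratio x <= exp_ratio y.
Proof.
by move=> le_xy; rewrite ler_pM2r ?p_gt0 // (ler_pXn2r pred_p_gt0) ?nnegrE ?abs_ge0.
Qed.

Lemma exp_ratio_lt1_abs_le1 z : exp_ratio z < 1 -> a z <= 1.
Proof.
move=> z_small; rewrite -(ler_pXn2r pred_p_gt0) ?nnegrE ?abs_ge0 // expr1n.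
by apply: le_trans (ltW z_small); rewrite ler_peMr ?exprn_ge0 ?abs_ge0 ?ltW ?p_gt1.
Qed.

Lemma abs_exp_term z k : a (z ^+ k / k`!%:R) ^+ p.-1 <= exp_ratio z ^+ k.
Proof.
have term_fact : a (z ^+ k / k`!%:R) * a k`!%:R = a z ^+ k.
  by rewrite -absM divfK ?(factf_neq0 abs_pchar0) ?absX.
apply: le_trans (_ : a (z ^+ k / k`!%:R) ^+ p.-1 * (a k`!%:R ^+ p.-1 * p%:R ^+ k) <= _).
  by rewrite ler_peMr ?exprn_ge0 ?abs_ge0 ?abs_fact_ge.
by rewrite mulrA -exprMn term_fact exprMn -!exprM mulnC.
Qed.

Lemma abs_exp_term_le1 z k : exp_ratio z < 1 -> a (z ^+ k / k`!%:R) <= 1.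
Proof.
move=> z_small; rewrite -(ler_pXn2r pred_p_gt0) ?nnegrE ?abs_ge0 // expr1n.
by apply: le_trans (abs_exp_term z k) _; rewrite exprn_ile1 ?exp_ratio_ge0 ?ltW.
Qed.

Lemma Kexp_cvg z : exp_ratio z < 1 ->
  Kcvg a (fun N => \sum_(k < N) z ^+ k / k`!%:R) (Kexp a z).
Proof.
move=> z_small; apply: Kseries_cvg.
apply: (Kcvg0_geometric (b := 1) pred_p_gt0 ler01 (exp_ratio_ge0 z) z_small).
by move=> k; rewrite mul1r abs_exp_term.
Qed.

Lemma Kexp0 : Kexp a 0 = 1.
Proof.
rewrite /Kexp /Kseries; apply: Kcvg_lim => e e0; exists 1%N => -[|N] // _.
rewrite big_ord_recl big1 => [|i _]; last by rewrite expr0n mul0r.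
by rewrite expr0 fact0 divr1 addr0 subrr abs0.
Qed.

Lemma KexpD x y : exp_ratio x < 1 -> exp_ratio y < 1 ->
  Kexp a (x + y) = Kexp a x * Kexp a y.
Proof.
move=> x_small y_small; set s := Num.max (exp_ratio x) (exp_ratio y).
have s1 : s < 1 by rewrite gt_max x_small.
have [xs ys] : exp_ratio x <= s /\ exp_ratio y <= s by rewrite !le_max !lexx orbT.
have xy_small : exp_ratio (x + y) < 1.
  by have := absD x y; rewrite le_max => /orP[]/exp_ratio_le/le_lt_trans->.
have term_le z : exp_ratio z <= s -> forall k, a (z ^+ k / k`!%:R) ^+ p.-1 <= s ^+ k.
  move=> zs k; apply: le_trans (abs_exp_term z k) _.
  by rewrite lerXn2r ?nnegrE ?exp_ratio_ge0 ?(le_trans (exp_ratio_ge0 z)).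
have := cauchy_product_defect pred_p_gt0 (le_trans (exp_ratio_ge0 x) xs) s1
  (term_le x xs) (term_le y ys).
move=> /(KcvgB (KcvgM (Kexp_cvg x_small) (Kexp_cvg y_small))); rewrite subr0.
apply: Kcvg_unique; apply: eq_Kcvg (Kexp_cvg xy_small) => N.
rewrite subKr; apply: eq_bigr => k _.
exact: (exp_term_addn abs_pchar0).
Qed.

Lemma Kexp_mulrn c n : exp_ratio c < 1 -> Kexp a (n%:R * c) = Kexp a c ^+ n.
Proof.
move=> c_small; elim: n => [|n IH]; first by rewrite mul0r Kexp0 expr0.
have nc_small : exp_ratio (n%:R * c) < 1.
  by apply: le_lt_trans c_small; apply: exp_ratio_le; rewrite absM ler_piMl ?abs_ge0 ?abs_natr_le1.
by rewrite -natr1 mulrDl mul1r KexpD // IH exprSr.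
Qed.

Lemma Kexp_first_order M c : exp_ratio c < 1 -> a M <= 1 ->
  a (Kexp a (M * c) - (1 + M * c)) <= a M ^+ 2.
Proof.
move=> c_small M_le1.
have Mc_small : exp_ratio (M * c) < 1.
  by apply: le_lt_trans c_small; apply: exp_ratio_le; rewrite absM ler_piMl ?abs_ge0.
apply: (Kcvg_dist_le (Kexp_cvg Mc_small)); exists 2%N => -[|[|n]] // _.
rewrite 2!big_ord_recl /= expr0 expr1 fact0 divr1 divr1 addrA addrC addrK.
apply: abs_sum_le => [|i _]; first by rewrite exprn_ge0 ?abs_ge0.
rewrite /bump !leq0n !add1n exprMn -mulrA absM absX.
have -> : a M ^+ i.+2 = a M ^+ i * a M ^+ 2 by rewrite -exprD addn2.
rewrite mulrAC ler_piMl ?exprn_ge0 ?abs_ge0 // mulr_ile1 ?exprn_ge0 ?abs_ge0 //.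
  exact: exprn_ile1 (abs_ge0 M) M_le1.
exact: abs_exp_term_le1 c_small.
Qed.

Lemma exp_ratio_Klog q : a (1 - q) ^+ p.-1 < p%:R^-1 -> exp_ratio (Klog a q) < 1.
Proof.
move=> q_near1; set u := q - 1; set rho := a u ^+ p.-1.
have u_small : exp_ratio u < 1 by rewrite /exp_ratio /u abs_distC -ltr_pdivlMr ?p_gt0 ?mul1r.
have rho_ge0 : 0 <= rho by rewrite exprn_ge0 ?abs_ge0.
pose t k := (-1) ^+ k * u ^+ k.+1 / k.+1%:R.
have t_le k : a (t k) ^+ p.-1 <= rho * exp_ratio u ^+ k.
  have t_succ : a (t k) * a k.+1%:R = a u ^+ k.+1.
    by rewrite -absM divfK ?(char0_natf_neq0 abs_pchar0) // absM !absX absN abs1 expr1n mul1r.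
  apply: le_trans (_ : a (t k) ^+ p.-1 * (a k.+1%:R ^+ p.-1 * p%:R ^+ k) <= _).
    by rewrite ler_peMr ?exprn_ge0 ?abs_ge0 ?abs_succ_ge.
  by rewrite mulrA -exprMn t_succ /rho /exp_ratio exprMn -!exprM mulnC mulnS exprD mulrA.
have t_abs_le k : a (t k) <= a u.
  rewrite -(ler_pXn2r pred_p_gt0) ?nnegrE ?abs_ge0 //; apply: le_trans (t_le k) _.
  by rewrite ler_piMr // exprn_ile1 ?exp_ratio_ge0 ?ltW.
have log_cvg : Kcvg a (fun N => \sum_(k < N) t k) (Klog a q).
  exact/Kseries_cvg/(Kcvg0_geometric pred_p_gt0 rho_ge0 (exp_ratio_ge0 u) u_small).
apply: le_lt_trans u_small; apply: exp_ratio_le; rewrite -[Klog a q]subr0.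
apply: (Kcvg_dist_le log_cvg); exists 0%N => n _; rewrite subr0.
by apply: abs_sum_le; rewrite ?abs_ge0.
Qed.

(** * Twisted averages *)

Lemma Kcvg_shift_diff w (S : nat -> nat -> K) B n : (forall k, Kcvg a (S^~ k) (B k)) ->
  Kcvg a (fun N => shift_diff w (S N) n) (shift_diff w B n).
Proof.
move=> SB; apply: KcvgB (SB n); apply: KcvgMl.
by apply: (Kcvg_sum (F := fun N (i : 'I_n.+1) => S N (n - i)%N *+ 'C(n, i))) => i; apply: KcvgMn.
Qed.

Lemma shift_diff_cvg w (S : nat -> nat -> K) (r : nat -> K) :
    (forall n, Kcvg a (fun N => shift_diff w (S N) n) (r n)) ->
  (exists B, forall n, shift_diff w B n = r n) /\
  forall B, (forall n, shift_diff w B n = r n) -> forall n, Kcvg a (S^~ n) (B n).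
Proof.
move=> Sr; set L := fun n => Klim a (S^~ n).
have S_cvg n : Kcvg a (S^~ n) (L n).
  elim/ltn_ind: n => n IH; have [m [al [be Sn]]] := shift_diff_triangular abs_pchar0 w n.
  suff Sn_cvg : Kcvg a (S^~ n) (al * r m + \sum_(i < n) be i * L (n - i.+1)%N).
    by rewrite /L /= (Kcvg_lim Sn_cvg).
  have lower_cvg : Kcvg a (fun N => \sum_(i < n) be i * S N (n - i.+1)%N)
                          (\sum_(i < n) be i * L (n - i.+1)%N).
    by apply: Kcvg_sum => i; apply/KcvgMl/IH; have := ltn_ord i; lia.
  by apply: eq_Kcvg (KcvgD (KcvgMl al (Sr m)) lower_cvg) => N; rewrite (Sn (S N)).
have L_sol n : shift_diff w L n = r n by apply: Kcvg_unique (Kcvg_shift_diff w n S_cvg) (Sr n).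
split=> [|B BE n]; first by exists L.
by rewrite (@shift_diff_inj _ abs_pchar0 w B L _ n) // => k; rewrite BE L_sol.
Qed.

Lemma abs_deriv_le x k : a (x ^+ k.-1 *+ k) <= Num.max 1 (a x) ^+ k.
Proof.
set X := Num.max 1 (a x); have X_ge1 : 1 <= X by rewrite le_max lexx.
rewrite -mulr_natr absM absX; apply: le_trans (_ : X ^+ k.-1 * 1 <= _).
  apply: ler_pM; rewrite ?exprn_ge0 ?abs_ge0 ?abs_natr_le1 //.
  by apply: lerXn2r; rewrite ?nnegrE ?abs_ge0 ?(le_trans ler01 X_ge1) // le_max lexx orbT.
by rewrite mulr1 ler_weXn2l ?leq_pred.
Qed.

Lemma binomial_first_order x M n : a M <= 1 ->
  a ((x + M) ^+ n - x ^+ n - M * (x ^+ n.-1 *+ n)) <= a M ^+ 2 * Num.max 1 (a x) ^+ n.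
Proof.
move=> M_le1; set X := Num.max 1 (a x).
have X_ge1 : 1 <= X by rewrite le_max lexx.
have X_ge0 : 0 <= X := le_trans ler01 X_ge1.
have ax_le : a x <= X by rewrite le_max lexx orbT.
have axM_le : a (x + M) <= X by apply: absD_le => //; apply: le_trans M_le1 X_ge1.
elim: n => [|n IH]; first by rewrite subrr mulr0n mulr0 subr0 abs0 mulr_ge0 ?exprn_ge0 ?abs_ge0.
have xD : x * (x ^+ n.-1 *+ n) = x ^+ n *+ n.
  by case: n {IH} => [|n]; rewrite ?mulr0n ?mulr0 // mulrnAr -exprS.
have -> : (x + M) ^+ n.+1 - x ^+ n.+1 - M * (x ^+ n.+1.-1 *+ n.+1) =
    (x + M) * ((x + M) ^+ n - x ^+ n - M * (x ^+ n.-1 *+ n)) + M ^+ 2 * (x ^+ n.-1 *+ n).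
  rewrite /= mulrS -xD !exprS.
  by move: (x ^+ n.-1 *+ n) ((x + M) ^+ n) (x ^+ n) => D Y Xn; ring.
apply: absD_le; rewrite absM.
  by rewrite [X ^+ n.+1]exprS mulrCA; apply: ler_pM; rewrite ?abs_ge0.
rewrite absX; apply: ler_wpM2l; first by rewrite exprn_ge0 ?abs_ge0.
by apply: le_trans (abs_deriv_le x n) _; rewrite ler_weXn2l.
Qed.

(* With [W = 1 + M c + E] and [(x + M)^n = x^n + M n x^(n-1) + F], the numerator is
   [M (c x^n + n x^(n-1)) + F + M c (M n x^(n-1) + F) + E (x + M)^n], whose last three
   terms are [O(|M|^2)]. *)
Lemma difference_quotient_first_order (W c x M : K) n : a c <= 1 -> a M <= 1 -> M != 0 ->
    a (W - (1 + M * c)) <= a M ^+ 2 ->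
  a (M^-1 * (W * (x + M) ^+ n - x ^+ n) - (c * x ^+ n + x ^+ n.-1 *+ n))
    <= a M * Num.max 1 (a x) ^+ n.
Proof.
move=> c_le1 M_le1 M_neq0 E_le; set X := Num.max 1 (a x).
have X_ge1 : 1 <= X by rewrite le_max lexx.
have F_le := binomial_first_order x n M_le1.
have Y_le : a ((x + M) ^+ n) <= X ^+ n.
  rewrite absX lerXn2r ?nnegrE ?abs_ge0 ?(le_trans ler01 X_ge1) //.
  by apply: absD_le; [rewrite le_max lexx orbT | apply: le_trans M_le1 X_ge1].
have split_num (Y Xn D : K) : M^-1 * (W * Y - Xn) - (c * Xn + D) =
    M^-1 * ((Y - Xn - M * D) + M * c * (M * D + (Y - Xn - M * D)) + (W - (1 + M * c)) * Y).
  by field.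
rewrite split_num absM absV; move: E_le F_le Y_le.
set E := W - _; set D := x ^+ n.-1 *+ n; set F := _ - M * D; set Y := (x + M) ^+ n.
move=> E_le F_le Y_le; rewrite -/X in F_le.
have aM_gt0 : 0 < a M by rewrite lt_def abs_ge0 andbT; apply: contra M_neq0 => /eqP/abs_eq0->.
have Xn_ge0 : 0 <= X ^+ n by rewrite exprn_ge0 // (le_trans ler01 X_ge1).
suff num_le : a (F + M * c * (M * D + F) + E * Y) <= a M ^+ 2 * X ^+ n.
  by rewrite mulrC ler_pdivrMr //; apply: le_trans num_le _; rewrite expr2 mulrAC.
apply: absD_le; first apply: absD_le => //.
  have MDF_le : a (M * D + F) <= a M * X ^+ n.
    apply: absD_le; first by rewrite absM ler_pM2l ?abs_deriv_le.
    by apply: le_trans F_le _; apply: ler_wpM2r => //; rewrite expr2 ler_piMl ?abs_ge0.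
  rewrite !absM expr2 -!mulrA; apply: ler_wpM2l; first exact: abs_ge0.
  apply: le_trans (_ : 1 * (a M * X ^+ n) <= _); last by rewrite mul1r.
  by apply: ler_pM; rewrite ?abs_ge0.
by rewrite absM; apply: ler_pM; rewrite ?abs_ge0.
Qed.

Lemma difference_quotient_cvg c x n : exp_ratio c < 1 ->
  Kcvg a (fun N => (p ^ N)%:R^-1 * (Kexp a c ^+ (p ^ N) * (x + (p ^ N)%:R) ^+ n - x ^+ n))
    (c * x ^+ n + x ^+ n.-1 *+ n).
Proof.
move=> c_small; set X := Num.max 1 (a x).
apply: (Kcvg_squeeze (r := fun N => p%:R^-1 ^+ N * X ^+ n)) => [N|e e0].
  have aM : a (p ^ N)%:R = p%:R^-1 ^+ N by rewrite natrX absX abs_p.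
  have M_le1 : a (p ^ N)%:R <= 1 by rewrite aM exprn_ile1 ?p_inv_ge0 ?ltW ?p_inv_lt1.
  rewrite -aM -Kexp_mulrn //; apply: difference_quotient_first_order => //.
  - exact: exp_ratio_lt1_abs_le1.
  - by rewrite (char0_natf_neq0 abs_pchar0) // expn_gt0 prime_gt0.
  - exact: Kexp_first_order.
have X_gt0 : 0 < X ^+ n by rewrite exprn_gt0 // (lt_le_trans ltr01) // le_max lexx.
have [N pN] := eventually_exprn_lt p_inv_ge0 p_inv_lt1 (divr_gt0 e0 X_gt0).
by exists N => k Nk; rewrite -ltr_pdivlMr // pN.
Qed.

Lemma twisted_moments_cvg c x : exp_ratio c < 1 ->
  (exists B, forall n, shift_diff (Kexp a c) B n = c * x ^+ n + x ^+ n.-1 *+ n) /\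
  forall B, (forall n, shift_diff (Kexp a c) B n = c * x ^+ n + x ^+ n.-1 *+ n) ->
  forall n, Kcvg a (fun N => (p ^ N)%:R^-1 *
                    \sum_(y < p ^ N) Kexp a c ^+ y * (x + y%:R) ^+ n) (B n).
Proof.
move=> c_small; apply: shift_diff_cvg => n.
apply: eq_Kcvg (difference_quotient_cvg x n c_small) => N.
by rewrite shift_diffZ shift_diff_twisted_power_sum.
Qed.

Section HqBernoulli.
Variables (q : K) (h : int).
Hypothesis q_near1 : a (1 - q) ^+ p.-1 < p%:R^-1.

Lemma exp_ratio_hlogq : exp_ratio (h%:~R * Klog a q) < 1.
Proof.
apply: le_lt_trans (exp_ratio_Klog q_near1); apply: exp_ratio_le.
by rewrite absM ler_piMl ?abs_ge0 ?abs_intr_le1.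
Qed.

Lemma Kqpow_intrM (y : nat) : Kqpow a q (h * y%:Z)%:~R = Kqpow a q h%:~R ^+ y.
Proof.
rewrite /Kqpow -Kexp_mulrn ?exp_ratio_hlogq // intrM -pmulrn; congr (Kexp a _).
by rewrite mulrCA mulrA.
Qed.

Lemma hq_bernoulli_polyE x B : is_hq_bernoulli_poly a q h x B <->
  forall n, shift_diff (Kqpow a q h%:~R) B n = h%:~R * Klog a q * x ^+ n + x ^+ n.-1 *+ n.
Proof.
have den := fps_mul_exp_den abs_pchar0 (Kqpow a q h%:~R) B.
have num := fps_mul_num_exp abs_pchar0 (h%:~R * Klog a q) x.
split=> E n; first by rewrite -den -num; congr (_ * _); apply: E.
apply: (mulIf (factf_neq0 abs_pchar0 n)).
exact: etrans (den n) (etrans (E n) (esym (num n))).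
Qed.

Lemma volkenborn_hq_bernoulli_poly x :
  (exists B, is_hq_bernoulli_poly a q h x B) /\
  forall B, is_hq_bernoulli_poly a q h x B -> forall n,
    Kcvg a (fun N => (p ^ N)%:R^-1 *
      \sum_(y < p ^ N) Kqpow a q (h * y%:Z)%:~R * (x + y%:R) ^+ n) (B n).
Proof.
have [[B BE] B_cvg] := twisted_moments_cvg x exp_ratio_hlogq.
split=> [|B' /hq_bernoulli_polyE B'E n]; first by exists B; apply/hq_bernoulli_polyE.
apply: eq_Kcvg (B_cvg B' B'E n) => N; congr (_ * _).
by apply: eq_bigr => y _; rewrite Kqpow_intrM.
Qed.

End HqBernoulli.

End PadicAbs.

Theorem theorem1 (R : realType) (K : closedFieldType) (a : K -> R) (p : nat)
    (Hp : prime p) (Ha : is_padic_abs p a) (h : int) (q : K)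
    (Hq : a (1 - q) ^+ (p.-1) < (p%:R)^-1) :
  ((exists B, is_hq_bernoulli a q h B) /\
   forall B, is_hq_bernoulli a q h B -> forall n : nat,
     Kcvg a (fun N => ((p ^ N)%:R)^-1 *
                      \sum_(y < p ^ N) Kqpow a q (h * y%:Z)%:~R * (y%:R) ^+ n) (B n))
  /\
  (forall x : K, in_Zp a x ->
   (exists B, is_hq_bernoulli_poly a q h x B) /\
   forall B, is_hq_bernoulli_poly a q h x B -> forall n : nat,
     Kcvg a (fun N => ((p ^ N)%:R)^-1 *
                      \sum_(y < p ^ N) Kqpow a q (h * y%:Z)%:~R * (x + y%:R) ^+ n) (B n)).
Proof.
have moments := volkenborn_hq_bernoulli_poly Hp Ha h Hq.
split; last by move=> x _; exact: moments.
have [[B BE] B_cvg] := moments 0.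
split=> [|B' /hq_bernoulliE /B_cvg B'_cvg n]; first by exists B; apply/hq_bernoulliE.
by apply: eq_Kcvg (B'_cvg n) => N; under eq_bigr do rewrite add0r.
Qed.
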